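(* Let $\alpha\ge 0$, $\mu\ge 0$, $n\in\mathbb{N}=\{1,2,\dots\}$ and $x\in[0,\infty)$. Then (i) $T_n(1;x)=1$; (ii) $T_n(t;x)=x+\dfrac{2\alpha x^2}{n}$; (iii) $T_n(t^2;x)=x^2+\dfrac{4\alpha}{n^2}x^2+\dfrac{4\alpha}{n}x^3+\dfrac{4\alpha^2}{n^2}x^4+\dfrac{x}{n}+\dfrac{2\mu x}{n}\dfrac{e_\mu(-nx)}{e_\mu(nx)}$, where $T_n(f;x)$ denotes the operator applied to the function $t\mapsto f(t)$.
   Context: For $\mu>-\tfrac12$ define $\gamma_\mu(2k)=\dfrac{2^{2k}k!\,\Gamma(k+\mu+1/2)}{\Gamma(\mu+1/2)}$ and $\gamma_\mu(2k+1)=\dfrac{2^{2k+1}k!\,\Gamma(k+\mu+3/2)}{\Gamma(\mu+1/2)}$, $k\ge0$; $e_\mu(x)=\sum_{k\ge0} x^k/\gamma_\mu(k)$; $\theta_k=0$ if $k$ is even and $\theta_k=1$ if $k$ is odd. Let $h_k^\mu(\xi,\alpha)=\gamma_\mu(k)\sum_{j=0}^{\lfloor k/2\rfloor}\dfrac{\alpha^j\xi^{k-2j}}{j!\,\gamma_\mu(k-2j)}$ (so $\sum_k h_k^\mu(\xi,\alpha)t^k/\gamma_\mu(k)=e^{\alpha t^2}e_\mu(\xi t)$). For $\alpha\ge0,\mu\ge0$, $n\in\mathbb{N}$ and $x\in[0,\infty)$ define $$T_n(f;x)=\frac{1}{e^{\alpha x^2}e_\mu(nx)}\sum_{k=0}^\infty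 \frac{h_k^\mu(n,\alpha)}{\gamma_\mu(k)}x^k f\!\left(\frac{k+2\mu\theta_k}{n}\right).$$ *)

From Stdlib Require Import Reals Lra Lia.
From Coquelicot Require Import Coquelicot.
Open Scope R_scope.

(* Rising factorial (Pochhammer symbol): poch a k = a (a+1) ... (a+k-1)
   = Gamma(a+k)/Gamma(a) for a > 0. *)
Fixpoint poch (a : R) (k : nat) : R :=
  match k with
  | O => 1
  | S k' => poch a k' * (a + INR k')
  end.

(* gamma_mu(m):  m = 2k   -> 2^{2k} k! Gamma(k+mu+1/2)/Gamma(mu+1/2)
                 m = 2k+1 -> 2^{2k+1} k! Gamma(k+mu+3/2)/Gamma(mu+1/2) *)
Definition gam (mu : R) (m : nat) : R :=
  if Nat.even m
  then 2 ^ m * INR (Factorial.fact (Nat.div2 m)) * poch (mu + /2) (Nat.div2 m)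
  else 2 ^ m * INR (Factorial.fact (Nat.div2 m)) * poch (mu + /2) (S (Nat.div2 m)).

Definition e_mu (mu x : R) : R := Series (fun k => x ^ k / gam mu k).

Definition theta (k : nat) : R := if Nat.even k then 0 else 1.

Definition h_mu (mu : R) (k : nat) (xi al : R) : R :=
  gam mu k * sum_f_R0 (fun j => al ^ j * xi ^ (k - 2 * j)
                                / (INR (Factorial.fact j) * gam mu (k - 2 * j)))
                      (Nat.div2 k).

Definition T_op (al mu : R) (n : nat) (f : R -> R) (x : R) : R :=
  / (exp (al * x ^ 2) * e_mu mu (INR n * x)) *
  Series (fun k => h_mu mu k (INR n) al / gam mu k * x ^ k
                   * f ((INR k + 2 * mu * theta k) / INR n)).

From Stdlib Require Import Reals Lra Lia.
From Coquelicot Require Import Coquelicot.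
Open Scope R_scope.

(* Write z = alpha x^2, y = n x and [m] = m + 2 mu theta_m, so that
   gamma_mu(m+1) = [m+1] gamma_mu(m).  Since theta_k only depends on the parity of k,
   k + 2 mu theta_k = [k-2j] + 2j, and the k-th term of T_n(f; x) becomes
   sum_(2j <= k) z^j/j! * y^m/gamma_mu(m) * f(([m] + 2j)/n) with m = k - 2j.
   For f(t) = t^p, expanding ([m] + 2j)^p writes the whole series as a combination of
   Cauchy products (in t^2 and t) of the nonnegative moment series
   sum_j j^p z^j/j! and sum_m [m]^q y^m/gamma_mu(m).  Shifting the index with the
   recurrence evaluates them: the first are e^z, z e^z, z(z+1) e^z, the second are
   e_mu(y), y e_mu(y) and, as [m+1] = [m] + 1 + 2 mu (-1)^m,
   y (y e_mu(y) + e_mu(y) + 2 mu e_mu(-y)); this is where e_mu(-nx) comes from. *)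

Definition dunkl_int (mu : R) (m : nat) : R := INR m + 2 * mu * theta m.

Lemma even_double q : Nat.even (2 * q) = true.
Proof. now rewrite Nat.even_mul. Qed.

Lemma theta_S m : theta (S m) = 1 - theta m.
Proof.
  unfold theta. rewrite Nat.even_succ, <- Nat.negb_even.
  destruct (Nat.even m); simpl; ring.
Qed.

Lemma theta_sub_double k j : (2 * j <= k)%nat -> theta (k - 2 * j) = theta k.
Proof.
  intros Hjk. unfold theta.
  now rewrite <- (Nat.even_add_mul_2 (k - 2 * j) j), Nat.sub_add.
Qed.

Lemma pow_neg1_theta m : (-1) ^ m = 1 - 2 * theta m.
Proof.
  induction m as [|m IH]; [unfold theta; simpl; ring|].
  rewrite theta_S; simpl; rewrite IH; ring.
Qed.

Lemma dunkl_int_0 mu : dunkl_int mu 0 = 0.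
Proof. unfold dunkl_int, theta; simpl; ring. Qed.

Lemma dunkl_int_S mu m : dunkl_int mu (S m) = dunkl_int mu m + 1 + 2 * mu * (-1) ^ m.
Proof. unfold dunkl_int. rewrite S_INR, theta_S, pow_neg1_theta. ring. Qed.

Lemma gam_0 mu : gam mu 0 = 1.
Proof. unfold gam; simpl; ring. Qed.

Lemma gam_S mu m : gam mu (S m) = dunkl_int mu (S m) * gam mu m.
Proof.
  unfold gam, dunkl_int, theta.
  rewrite Nat.even_succ, <- Nat.negb_even.
  destruct (Nat.Even_or_Odd m) as [[q ->]|[q ->]].
  - rewrite even_double, Nat.div2_succ_double, Nat.div2_double; cbn [negb].
    simpl poch. rewrite !S_INR, mult_INR. simpl pow. simpl (INR 2). field.
  - assert (Hodd : Nat.even (2 * q + 1) = false)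
      by now rewrite Nat.add_comm, Nat.even_add_mul_2.
    assert (Hdiv : Nat.div2 (S (2 * q + 1)) = S q)
      by now replace (S (2 * q + 1)) with (2 * S q)%nat by lia; rewrite Nat.div2_double.
    rewrite Hodd, Hdiv, Nat.div2_odd'; cbn [negb].
    rewrite fact_simpl, mult_INR, !S_INR, plus_INR, mult_INR.
    simpl poch. simpl pow. simpl (INR 2). simpl (INR 1). ring.
Qed.

Section Positivity.

Variable mu : R.
Hypothesis mu_ge0 : 0 <= mu.

Lemma dunkl_int_ge m : INR m <= dunkl_int mu m.
Proof.
  unfold dunkl_int, theta. destruct (Nat.even m); nra.
Qed.

Lemma fact_le_gam m : INR (Factorial.fact m) <= gam mu m.
Proof.
  induction m as [|m IH]; [rewrite gam_0; simpl; lra|].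
  rewrite gam_S, fact_simpl, mult_INR.
  apply Rmult_le_compat; auto using pos_INR, dunkl_int_ge.
Qed.

Lemma gam_pos m : 0 < gam mu m.
Proof.
  eapply Rlt_le_trans; [|apply fact_le_gam].
  apply lt_0_INR, Factorial.lt_O_fact.
Qed.

End Positivity.

(* Coquelicot's lemmas state equalities in the carrier of a normed module, where
   [ring] and [field] do not apply; these are their statements over [R]. *)
Lemma is_series_Rext (a b : nat -> R) (l : R) :
  (forall k, a k = b k) -> is_series a l -> is_series b l.
Proof. exact (is_series_ext a b l). Qed.

Lemma is_series_Rplus (a b : nat -> R) la lb :
  is_series a la -> is_series b lb -> is_series (fun k => a k + b k) (la + lb).
Proof. exact (is_series_plus a b la lb). Qed.

Lemma is_series_Rmult_l (c : R) (a : nat -> R) l :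
  is_series a l -> is_series (fun k => c * a k) (c * l).
Proof. exact (is_series_scal_l c a l). Qed.

Lemma is_series_shift0 (u : nat -> R) l :
  u 0%nat = 0 -> is_series (fun k => u (S k)) l -> is_series u l.
Proof.
  intros u0 Hu. apply is_series_decr_1. rewrite u0.
  unfold plus, opp; simpl. rewrite Ropp_0, Rplus_0_r. exact Hu.
Qed.

Lemma is_series_ge_head (a : nat -> R) l :
  (forall k, 0 <= a k) -> is_series a l -> a 0%nat <= l.
Proof.
  intros a_ge0 Hl. rewrite <- (sum_O a).
  apply (is_lim_seq_incr_compare (sum_n a)); [exact Hl|].
  intros p. rewrite sum_Sn. specialize (a_ge0 (S p)). unfold plus; simpl. lra.
Qed.

Lemma sum_f_R0_even (G : nat -> nat -> R) p :
  sum_f_R0 (fun i => if Nat.even i then G (Nat.div2 i) i else 0) p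
  = sum_f_R0 (fun j => G j (2 * j)%nat) (Nat.div2 p).
Proof.
  induction p as [|p IH]; [reflexivity|].
  rewrite tech5, IH.
  destruct (Nat.Even_or_Odd p) as [[q ->]|[q ->]].
  - rewrite Nat.even_succ, <- Nat.negb_even, even_double,
      Nat.div2_succ_double, Nat.div2_double; simpl; ring.
  - replace (S (2 * q + 1)) with (2 * S q)%nat by lia.
    rewrite even_double, Nat.div2_double, Nat.div2_odd', tech5. reflexivity.
Qed.

Definition spread2 (a : nat -> R) (i : nat) : R :=
  if Nat.even i then a (Nat.div2 i) else 0.

Lemma is_series_spread2 a l : is_series a l -> is_series (spread2 a) l.
Proof.
  intros Ha. unfold is_series.
  apply filterlim_ext with (fun p => sum_n a (Nat.div2 p)).
  - intros p. rewrite !sum_n_Reals. symmetry. exact (sum_f_R0_even (fun j _ => a j) p).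
  - apply (filterlim_comp _ _ _ Nat.div2 (sum_n a) eventually eventually); [|exact Ha].
    intros P [M HM]. exists (2 * M)%nat. intros p Hp.
    apply HM, Nat.div2_le_lower_bound, Hp.
Qed.

(* Coefficient of t^k in (sum_j a_j t^(2j)) (sum_m b_m t^m). *)
Definition conv2 (a b : nat -> R) (k : nat) : R :=
  sum_f_R0 (fun j => a j * b (k - 2 * j)%nat) (Nat.div2 k).

Lemma is_series_conv2 a b la lb :
  (forall j, 0 <= a j) -> (forall m, 0 <= b m) ->
  is_series a la -> is_series b lb -> is_series (conv2 a b) (la * lb).
Proof.
  intros a_ge0 b_ge0 Ha Hb.
  assert (spread_ge0 : forall i, 0 <= spread2 a i).
  { intros i. unfold spread2. destruct (Nat.even i); [apply a_ge0 | lra]. }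
  eapply is_series_ext;
    [|exact (is_series_mult_pos _ _ _ _ (is_series_spread2 a la Ha) Hb spread_ge0 b_ge0)].
  intros k. unfold conv2.
  rewrite <- (sum_f_R0_even (fun j i => a j * b (k - i)%nat)).
  apply sum_eq. intros i _. unfold spread2. destruct (Nat.even i); ring.
Qed.

Definition exp_term (z : R) (j : nat) : R := z ^ j / INR (Factorial.fact j).

Lemma is_series_exp_term z : is_series (exp_term z) (exp z).
Proof.
  eapply is_series_ext; [|exact (is_exp_Reals z)].
  intros j. unfold exp_term. rewrite pow_n_pow. reflexivity.
Qed.

Lemma exp_term_ge0 z j : 0 <= z -> 0 <= exp_term z j.
Proof.
  intros z_ge0. unfold exp_term.
  apply Rle_mult_inv_pos; [apply pow_le, z_ge0 | apply lt_0_INR, Factorial.lt_O_fact].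
Qed.

Lemma is_series_exp_index_mul (g : nat -> R) (z l : R) :
  is_series (fun j => g (S j) * exp_term z j) l ->
  is_series (fun j => INR j * g j * exp_term z j) (z * l).
Proof.
  intros Hg. apply is_series_shift0; [simpl; ring|].
  eapply is_series_Rext; [|exact (is_series_Rmult_l z _ _ Hg)].
  intros j. unfold exp_term. rewrite fact_simpl, mult_INR.
  pose proof (lt_0_INR _ (Factorial.lt_O_fact j)).
  pose proof (lt_0_INR (S j) (Nat.lt_0_succ j)).
  simpl pow. field. lra.
Qed.

Definition exp_moment (p : nat) (z : R) (j : nat) : R := INR j ^ p * exp_term z j.

Lemma exp_moment_ge0 p z j : 0 <= z -> 0 <= exp_moment p z j.
Proof.
  intros z_ge0. apply Rmult_le_pos; [apply pow_le, pos_INR | apply exp_term_ge0, z_ge0].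
Qed.

Lemma is_series_exp_moment0 z : is_series (exp_moment 0 z) (exp z).
Proof.
  eapply is_series_Rext; [|apply is_series_exp_term]. intros j. unfold exp_moment. ring.
Qed.

Lemma is_series_exp_moment1 z : is_series (exp_moment 1 z) (z * exp z).
Proof.
  eapply is_series_Rext; [|apply (is_series_exp_index_mul (fun _ => 1))].
  - intros j. unfold exp_moment. ring.
  - eapply is_series_Rext; [|apply is_series_exp_term]. intros j. ring.
Qed.

Lemma is_series_exp_moment2 z : is_series (exp_moment 2 z) (z * (z + 1) * exp z).
Proof.
  replace (z * (z + 1) * exp z) with (z * (z * exp z + exp z)) by ring.
  eapply is_series_Rext; [|apply (is_series_exp_index_mul INR)].
  - intros j. unfold exp_moment. ring.
  - eapply is_series_Rext;
      [|exact (is_series_Rplus _ _ _ _ (is_series_exp_moment1 z) (is_series_exp_term z))].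
    intros j. unfold exp_moment. rewrite S_INR. ring.
Qed.

Definition e_mu_term (mu y : R) (m : nat) : R := y ^ m / gam mu m.

Section DunklExponential.

Variable mu : R.
Hypothesis mu_ge0 : 0 <= mu.

Lemma e_mu_term_ge0 y m : 0 <= y -> 0 <= e_mu_term mu y m.
Proof.
  intros y_ge0. unfold e_mu_term.
  apply Rle_mult_inv_pos; [apply pow_le, y_ge0 | apply gam_pos, mu_ge0].
Qed.

Lemma is_series_e_mu_term y : is_series (e_mu_term mu y) (e_mu mu y).
Proof.
  apply Series_correct, ex_series_Rabs.
  apply (ex_series_le (fun m => Rabs (e_mu_term mu y m)) (exp_term (Rabs y))).
  - intros m. change (Rabs (Rabs (e_mu_term mu y m)) <= exp_term (Rabs y) m).
    pose proof (gam_pos mu mu_ge0 m).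
    unfold e_mu_term, exp_term, Rdiv.
    rewrite Rabs_Rabsolu, Rabs_mult, Rabs_inv, <- RPow_abs, (Rabs_pos_eq (gam mu m)) by lra.
    apply Rmult_le_compat_l; [apply pow_le, Rabs_pos|].
    apply Rinv_le_contravar; [apply lt_0_INR, Factorial.lt_O_fact | apply fact_le_gam, mu_ge0].
  - eexists. apply is_series_exp_term.
Qed.

Lemma e_mu_ge1 y : 0 <= y -> 1 <= e_mu mu y.
Proof.
  intros y_ge0.
  replace 1 with (e_mu_term mu y 0) by (unfold e_mu_term; rewrite gam_0; simpl; field).
  apply is_series_ge_head; [intros m; apply e_mu_term_ge0, y_ge0 | apply is_series_e_mu_term].
Qed.

Lemma is_series_dunkl_int_mul (g : nat -> R) (y l : R) :
  is_series (fun m => g (S m) * e_mu_term mu y m) l ->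
  is_series (fun m => dunkl_int mu m * g m * e_mu_term mu y m) (y * l).
Proof.
  intros Hg. apply is_series_shift0; [rewrite dunkl_int_0; ring|].
  eapply is_series_Rext; [|exact (is_series_Rmult_l y _ _ Hg)].
  intros m. unfold e_mu_term. rewrite gam_S.
  pose proof (gam_pos mu mu_ge0 m).
  pose proof (dunkl_int_ge mu mu_ge0 (S m)).
  pose proof (lt_0_INR (S m) (Nat.lt_0_succ m)).
  simpl pow. field. lra.
Qed.

Definition e_mu_moment (p : nat) (y : R) (m : nat) : R :=
  dunkl_int mu m ^ p * e_mu_term mu y m.

Lemma e_mu_moment_ge0 p y m : 0 <= y -> 0 <= e_mu_moment p y m.
Proof.
  intros y_ge0. apply Rmult_le_pos; [|apply e_mu_term_ge0, y_ge0].
  apply pow_le. pose proof (dunkl_int_ge mu mu_ge0 m). pose proof (pos_INR m). lra.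
Qed.

Lemma is_series_e_mu_moment0 y : is_series (e_mu_moment 0 y) (e_mu mu y).
Proof.
  eapply is_series_Rext; [|apply is_series_e_mu_term]. intros m. unfold e_mu_moment. ring.
Qed.

Lemma is_series_e_mu_moment1 y : is_series (e_mu_moment 1 y) (y * e_mu mu y).
Proof.
  eapply is_series_Rext; [|apply (is_series_dunkl_int_mul (fun _ => 1))].
  - intros m. unfold e_mu_moment. ring.
  - eapply is_series_Rext; [|apply is_series_e_mu_term]. intros m. ring.
Qed.

Lemma is_series_e_mu_moment2 y :
  is_series (e_mu_moment 2 y) (y * (y * e_mu mu y + e_mu mu y + 2 * mu * e_mu mu (- y))).
Proof.
  eapply is_series_Rext; [|apply (is_series_dunkl_int_mul (dunkl_int mu))].
  - intros m. unfold e_mu_moment. ring.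
  - eapply is_series_Rext;
      [|exact (is_series_Rplus _ _ _ _
                 (is_series_Rplus _ _ _ _ (is_series_e_mu_moment1 y) (is_series_e_mu_term y))
                 (is_series_Rmult_l (2 * mu) _ _ (is_series_e_mu_term (- y))))].
    intros m. unfold e_mu_moment, e_mu_term. rewrite dunkl_int_S.
    replace (- y) with (-1 * y) by ring. rewrite Rpow_mult_distr. unfold Rdiv. ring.
Qed.

End DunklExponential.

Section TOperator.

Variables (al mu : R) (n : nat) (x : R).
Hypotheses (al_ge0 : 0 <= al) (mu_ge0 : 0 <= mu) (n_ge1 : (1 <= n)%nat) (x_ge0 : 0 <= x).

Local Notation N := (INR n).
Local Notation z := (al * x ^ 2).
Local Notation y := (N * x).

Definition T_term (f : R -> R) (k : nat) : R :=
  sum_f_R0 (fun j => exp_term z j * e_mu_term mu y (k - 2 * j)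
                     * f ((dunkl_int mu (k - 2 * j) + 2 * INR j) / N)) (Nat.div2 k).

Lemma T_op_summand f k :
  h_mu mu k N al / gam mu k * x ^ k * f ((INR k + 2 * mu * theta k) / N) = T_term f k.
Proof.
  unfold h_mu, T_term. pose proof (gam_pos mu mu_ge0 k).
  set (inner := sum_f_R0 (fun j => al ^ j * _ / _) _).
  replace (gam mu k * inner / gam mu k) with inner by (field; lra).
  rewrite Rmult_assoc, Rmult_comm. unfold inner. rewrite scal_sum. apply sum_eq. intros j Hj.
  assert (Hjk : (2 * j <= k)%nat)
    by (pose proof (Nat.div2_odd k); destruct (Nat.odd k); simpl in *; lia).
  replace (INR k + 2 * mu * theta k) with (dunkl_int mu (k - 2 * j) + 2 * INR j)
    by (unfold dunkl_int; rewrite theta_sub_double, minus_INR, mult_INR by exact Hjk;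
        simpl; ring).
  replace (x ^ k) with (x ^ (2 * j) * x ^ (k - 2 * j))
    by (rewrite <- pow_add; f_equal; lia).
  unfold exp_term, e_mu_term.
  rewrite !Rpow_mult_distr, pow_mult.
  pose proof (lt_0_INR _ (Factorial.lt_O_fact j)).
  pose proof (gam_pos mu mu_ge0 (k - 2 * j)).
  field. lra.
Qed.

Lemma T_op_of_is_series f L :
  is_series (T_term f) L -> T_op al mu n f x = L / (exp z * e_mu mu y).
Proof.
  intros HL. unfold T_op.
  rewrite (is_series_unique _ L (is_series_Rext _ _ _ (fun k => eq_sym (T_op_summand f k)) HL)).
  unfold Rdiv. ring.
Qed.

Let N_pos : 0 < N.
Proof. apply lt_0_INR. lia. Qed.

Let z_ge0 : 0 <= z.
Proof. apply Rmult_le_pos; [exact al_ge0 | apply pow_le, x_ge0]. Qed.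

Let y_ge0 : 0 <= y.
Proof. apply Rmult_le_pos; [apply pos_INR | exact x_ge0]. Qed.

Let exp_z_pos : 0 < exp z := exp_pos z.

Let e_mu_pos : 0 < e_mu mu y.
Proof. pose proof (e_mu_ge1 mu mu_ge0 y y_ge0). lra. Qed.

Lemma is_series_moment_conv2 p q la lb :
  is_series (exp_moment p z) la -> is_series (e_mu_moment mu q y) lb ->
  is_series (conv2 (exp_moment p z) (e_mu_moment mu q y)) (la * lb).
Proof.
  apply is_series_conv2; intros j.
  - apply exp_moment_ge0, z_ge0.
  - apply e_mu_moment_ge0; [exact mu_ge0 | exact y_ge0].
Qed.

Lemma T_term_const k :
  T_term (fun _ => 1) k = conv2 (exp_moment 0 z) (e_mu_moment mu 0 y) k.
Proof.
  unfold T_term, conv2. apply sum_eq. intros j _. unfold exp_moment, e_mu_moment. ring.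
Qed.

Lemma T_term_id k :
  T_term (fun t => t) k =
    / N * conv2 (exp_moment 0 z) (e_mu_moment mu 1 y) k
    + 2 / N * conv2 (exp_moment 1 z) (e_mu_moment mu 0 y) k.
Proof.
  unfold T_term, conv2. rewrite !scal_sum, <- plus_sum.
  apply sum_eq. intros j _. unfold exp_moment, e_mu_moment. field. lra.
Qed.

Lemma T_term_sqr k :
  T_term (fun t => t ^ 2) k =
    / N ^ 2 * conv2 (exp_moment 0 z) (e_mu_moment mu 2 y) k
    + 4 / N ^ 2 * conv2 (exp_moment 1 z) (e_mu_moment mu 1 y) k
    + 4 / N ^ 2 * conv2 (exp_moment 2 z) (e_mu_moment mu 0 y) k.
Proof.
  unfold T_term, conv2. rewrite !scal_sum, <- !plus_sum.
  apply sum_eq. intros j _. unfold exp_moment, e_mu_moment. field. lra.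
Qed.

Lemma T_op_const : T_op al mu n (fun _ => 1) x = 1.
Proof.
  rewrite (T_op_of_is_series _ _
    (is_series_Rext _ _ _ (fun k => eq_sym (T_term_const k))
       (is_series_moment_conv2 _ _ _ _
          (is_series_exp_moment0 z) (is_series_e_mu_moment0 mu mu_ge0 y)))).
  field. lra.
Qed.

Lemma T_op_id : T_op al mu n (fun t => t) x = x + 2 * al * x ^ 2 / N.
Proof.
  rewrite (T_op_of_is_series _ _
    (is_series_Rext _ _ _ (fun k => eq_sym (T_term_id k))
       (is_series_Rplus _ _ _ _
          (is_series_Rmult_l _ _ _ (is_series_moment_conv2 _ _ _ _
             (is_series_exp_moment0 z) (is_series_e_mu_moment1 mu mu_ge0 y)))
          (is_series_Rmult_l _ _ _ (is_series_moment_conv2 _ _ _ _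
             (is_series_exp_moment1 z) (is_series_e_mu_moment0 mu mu_ge0 y)))))).
  field. lra.
Qed.

Lemma T_op_sqr :
  T_op al mu n (fun t => t ^ 2) x =
    x ^ 2 + 4 * al / N ^ 2 * x ^ 2 + 4 * al / N * x ^ 3
    + 4 * al ^ 2 / N ^ 2 * x ^ 4 + x / N
    + 2 * mu * x / N * (e_mu mu (- y) / e_mu mu y).
Proof.
  rewrite (T_op_of_is_series _ _
    (is_series_Rext _ _ _ (fun k => eq_sym (T_term_sqr k))
       (is_series_Rplus _ _ _ _
          (is_series_Rplus _ _ _ _
             (is_series_Rmult_l _ _ _ (is_series_moment_conv2 _ _ _ _
                (is_series_exp_moment0 z) (is_series_e_mu_moment2 mu mu_ge0 y)))
             (is_series_Rmult_l _ _ _ (is_series_moment_conv2 _ _ _ _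
                (is_series_exp_moment1 z) (is_series_e_mu_moment1 mu mu_ge0 y))))
          (is_series_Rmult_l _ _ _ (is_series_moment_conv2 _ _ _ _
             (is_series_exp_moment2 z) (is_series_e_mu_moment0 mu mu_ge0 y)))))).
  field. lra.
Qed.

End TOperator.

Theorem lemma3 (al mu : R) (n : nat) (x : R) :
  0 <= al -> 0 <= mu -> (1 <= n)%nat -> 0 <= x ->
  T_op al mu n (fun _ => 1) x = 1 /\
  T_op al mu n (fun t => t) x = x + 2 * al * x ^ 2 / INR n /\
  T_op al mu n (fun t => t ^ 2) x =
    x ^ 2 + 4 * al / INR n ^ 2 * x ^ 2 + 4 * al / INR n * x ^ 3
    + 4 * al ^ 2 / INR n ^ 2 * x ^ 4 + x / INR n
    + 2 * mu * x / INR n * (e_mu mu (- (INR n * x)) / e_mu mu (INR n * x)).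
Proof.
  intros al_ge0 mu_ge0 n_ge1 x_ge0.
  split; [|split].
  - exact (T_op_const al mu n x al_ge0 mu_ge0 n_ge1 x_ge0).
  - exact (T_op_id al mu n x al_ge0 mu_ge0 n_ge1 x_ge0).
  - exact (T_op_sqr al mu n x al_ge0 mu_ge0 n_ge1 x_ge0).
Qed.
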